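(* Let $n\ge1$, $N\ge3$, $m=n+N$, let $u>0$ solve $\partial_tu=\Delta_xu$ on $\mathbb{R}^n\times(0,\infty)$ with $u=t^{-n/2}e^{-f}$, fix $0<\tau_1<\tau_2$ and assume $f$ and all of its partial derivatives in $x,t$ are bounded on $\mathbb{R}^n\times[\tau_1,\tau_2]$. Let $v,b,B$ be as in the context and, at $(x,y)$, set $\tau=\frac{|y|^2}{2N}\in[\tau_1,\tau_2]$. Then, in block form with respect to $\mathbb{R}^m=\mathbb{R}^n\times\mathbb{R}^N$, \[ \mathrm{Hess}(b^2)(x,y)=\frac{2b^2}{N}\Big(\mathrm{Hess}_xf(x,\tau)\oplus\frac{1}{2\tau}I_N+O(N^{-1/2})\,Q_1+O(N^{-1})\,Q_2\Big), \] where $\mathrm{Hess}_xf(x,\tau)$ occupies the $n\times n$ block and $\frac1{2\tau}I_N$ the $N\times N$ block, $Q_1$ is a matrix supported in the off-diagonal blocks and $Q_2$ a matrix supported in the two diagonal blocks, with entries bounded independently of $N$. Moreover \[ |B|^2=\frac{4b^4}{N^2}\Big(\Big|\mathrm{Hess}_xf(x,\tau)-\frac{1}{2\tau}I_n\Big|^2+O(N^{-1})\Big). \] Here the $O(\cdot)$ constants do not depend on $N,x,y$.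
   Context: $\mathbb{R}^m=\mathbb{R}^n\times\mathbb{R}^N$, points $(x,y)$, $r=|y|$; $\mathrm{Hess}$ and $\Delta$ are Euclidean on $\mathbb{R}^m$, $\mathrm{Hess}_x$ is the Hessian in $x$. $v(x,y)=r^{2-m}\exp(-f(x,\tfrac{r^2}{2N}))$, $b=v^{1/(2-m)}$, $B=\mathrm{Hess}(b^2)-\frac{\Delta b^2}{m}I_m$, $|\cdot|^2$ the squared Hilbert–Schmidt norm. *)

From HB Require Import structures.
From mathcomp Require Import all_boot all_order all_algebra.
From mathcomp Require Import all_classical all_reals all_analysis.
Set Implicit Arguments. Unset Strict Implicit. Unset Printing Implicit Defensive.
Import Order.TTheory GRing.Theory Num.Theory.
Import numFieldNormedType.Exports.
Local Open Scope ring_scope.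

Section Defs.
Variable R : realType.

Definition ebas (k : nat) (i : 'I_k) : 'rV[R]_k := delta_mx 0 i.

(* Functions g(x,t) on R^n x R.  Partial derivative in direction
   Some i (= d/dx_i) or None (= d/dt). *)
Definition partial (n : nat) (g : 'rV[R]_n -> R -> R) (d : option 'I_n)
  : 'rV[R]_n -> R -> R :=
  fun x t => match d with
             | Some i => derive (fun x' => g x' t) x (ebas i)
             | None => derive (g x) t 1
             end.

(* iterated partial derivative: iter_partial g [:: d1; ...; dk] = d_{d1} ... d_{dk} g *)
Definition iter_partial (n : nat) (g : 'rV[R]_n -> R -> R) (l : seq (option 'I_n))
  : 'rV[R]_n -> R -> R := foldr (fun d h => partial h d) g l.

Definition smooth_pos (n : nat) (f : 'rV[R]_n -> R -> R) : Prop :=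
  forall (l : seq (option 'I_n)) (x : 'rV[R]_n) (t : R), 0 < t ->
    {for (x, t), continuous (fun z : 'rV[R]_n * R => iter_partial f l z.1 z.2)} /\
    (forall i : 'I_n, derivable (fun x' => iter_partial f l x' t) x (ebas i)) /\
    derivable (iter_partial f l x) t 1.

Definition heat_u (n : nat) (f : 'rV[R]_n -> R -> R) (x : 'rV[R]_n) (t : R) : R :=
  t `^ (- (n%:R / 2)) * expR (- f x t).

Definition heat_sol (n : nat) (f : 'rV[R]_n -> R -> R) : Prop :=
  forall (x : 'rV[R]_n) (t : R), 0 < t ->
    derive (heat_u f x) t 1 =
    \sum_(i < n) derive (fun x' => derive (fun x'' => heat_u f x'' t) x' (ebas i))
                        x (ebas i).

Definition bounded_partials (n : nat) (f : 'rV[R]_n -> R -> R) (tau1 tau2 : R) : Prop :=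
  forall l : seq (option 'I_n), exists C : R, forall (x : 'rV[R]_n) (t : R),
    tau1 <= t <= tau2 -> `|iter_partial f l x t| <= C.

Definition hessx (n : nat) (f : 'rV[R]_n -> R -> R) (x : 'rV[R]_n) (t : R) : 'M[R]_n :=
  \matrix_(i, j) iter_partial f [:: Some i; Some j] x t.

Definition hess (k : nat) (h : 'rV[R]_k -> R) (p : 'rV[R]_k) : 'M[R]_k :=
  \matrix_(i, j) derive (fun q => derive h q (ebas j)) p (ebas i).

Definition enorm (k : nat) (y : 'rV[R]_k) : R := Num.sqrt (\sum_(i < k) y 0 i ^+ 2).

Definition hs2 (k : nat) (A : 'M[R]_k) : R := \sum_(i < k) \sum_(j < k) A i j ^+ 2.

Definition vfun (n N : nat) (f : 'rV[R]_n -> R -> R) (p : 'rV[R]_(n + N)) : R :=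
  let r := enorm (rsubmx p) in
  r `^ (2 - (n + N)%:R) * expR (- f (lsubmx p) (r ^+ 2 / (2 * N%:R))).

Definition bfun (n N : nat) (f : 'rV[R]_n -> R -> R) (p : 'rV[R]_(n + N)) : R :=
  vfun f p `^ (1 / (2 - (n + N)%:R)).

Definition bsq (n N : nat) (f : 'rV[R]_n -> R -> R) (p : 'rV[R]_(n + N)) : R :=
  bfun f p ^+ 2.

Definition Bmat (n N : nat) (f : 'rV[R]_n -> R -> R) (p : 'rV[R]_(n + N)) : 'M[R]_(n + N) :=
  hess (@bsq n N f) p - (\tr (hess (@bsq n N f) p) / (n + N)%:R)%:M.

Definition offdiag_supp (n N : nat) (Q : 'M[R]_(n + N)) : Prop :=
  ulsubmx Q = 0 /\ drsubmx Q = 0.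
Definition diag_supp (n N : nat) (Q : 'M[R]_(n + N)) : Prop :=
  ursubmx Q = 0 /\ dlsubmx Q = 0.

End Defs.

From HB Require Import structures.
From mathcomp Require Import all_boot all_order all_algebra.
From mathcomp Require Import all_classical all_reals all_analysis.
From mathcomp Require Import ring lra.
Set Implicit Arguments.
Unset Strict Implicit.
Unset Printing Implicit Defensive.
Import Order.TTheory GRing.Theory Num.Theory.
Import numFieldNormedType.Exports.
Local Open Scope ring_scope.

(* Put s = |y|^2, t = s/(2N) and kappa = 2/(m-2), so that b^2 = s exp(kappa f(x,t)).  Only t
   depends on y, hence every second derivative of b^2 is 2b^2/N times an explicit expression in
   the derivatives of f of order at most two at (x,t), with coefficients built from N kappa <= 3,
   kappa, 1/t and the y_a.  This writes Hess(b^2) as 2b^2/N times the block matrix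
     [[Hess_x f + rho, nu y^T], [y nu'^T, lam I + mu y y^T]]
   in which N rho, N nu, N nu', N (lam - 1/(2t)) and N^2 mu are bounded uniformly in N.  Since
   |y_a| <= sqrt(2Nt), the off-diagonal blocks are O(N^-1/2) and the diagonal corrections O(N^-1).
   For |B|^2, the trace term tr/m is 1/(2t) + O(1/N), and the off-diagonal and rank-one blocks
   contribute (sum_i nu_i^2) |y|^2 = O(1/N) and mu^2 |y|^4 = O(1/N) to the squared norm. *)

Section DirectionalDerivatives.
Variable R : realType.

Lemma is_derive_line_transfer (V1 V2 W : normedModType R) (F : V1 -> W) (P : V2 -> W)
    (a v : V1) (b w : V2) (d : W) :
  (forall h : R, F (h *: v + a) = P (h *: w + b)) -> is_derive b w P d -> is_derive a v F d.
Proof.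
move=> FP [dP <-].
have Fa : F a = P b by have := FP 0; rewrite !scale0r !add0r.
have quotE : (fun h : R => h^-1 *: ((F \o shift a) (h *: v) - F a)) =
             (fun h : R => h^-1 *: ((P \o shift b) (h *: w) - P b)).
  by apply/funext => h /=; rewrite FP Fa.
apply: DeriveDef; first by rewrite /derivable quotE.
by rewrite /derive quotE.
Qed.

Lemma is_derive_comp_real (V : normedModType R) (phi : V -> R) (g : R -> R) (a v : V)
    (dphi dg : R) :
  is_derive a v phi dphi -> is_derive (phi a) 1 g dg ->
  is_derive a v (fun q => g (phi q)) (dg * dphi).
Proof.
move=> dphi_a dg_a; pose psi h := phi (h *: v + a).
have dpsi : is_derive (0 : R) 1 psi dphi.
  by apply: (is_derive_line_transfer _ dphi_a) => h; rewrite /psi scaler1 addr0.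
have dg_psi0 : is_derive (psi 0) 1 g dg by rewrite /psi scale0r add0r.
apply: (is_derive_line_transfer _ (is_derive1_comp dg_psi0 dpsi)) => h.
by rewrite /= /psi scaler1 addr0.
Qed.

Lemma is_derive_add (V : normedModType R) (F G : V -> R) (a v : V) (dF dG : R) :
  is_derive a v F dF -> is_derive a v G dG -> is_derive a v (fun q => F q + G q) (dF + dG).
Proof. exact: is_deriveD. Qed.

Lemma is_derive_mul (V : normedModType R) (F G : V -> R) (a v : V) (dF dG : R) :
  is_derive a v F dF -> is_derive a v G dG ->
  is_derive a v (fun q => F q * G q) (F a * dG + G a * dF).
Proof. exact: is_deriveM. Qed.

Lemma is_derive_quadratic (V : normedModType R) (F : V -> R) (a v : V) (d k : R) :
  (forall h : R, F (h *: v + a) = F a + h * d + h ^+ 2 * k) -> is_derive a v F d.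
Proof.
move=> Fline.
apply: (is_derive_line_transfer (P := fun h : R => F a + h * d + h * h * k) (b := 0) (w := 1)).
  by move=> h; rewrite Fline scaler1 addr0 expr2.
have did := is_derive_id (0 : R) (1 : R).
have dcst (c : R) := is_derive_cst c (0 : R) (1 : R).
have dpoly := is_derive_add (is_derive_add (dcst (F a)) (is_derive_mul did (dcst d)))
  (is_derive_mul (is_derive_mul did did) (dcst k)).
by apply: is_derive_eq dpoly _; rewrite /=; ring.
Qed.

Lemma hess_is_derive k (G g : 'rV[R]_k -> R) (p : 'rV[R]_k) (I J : 'I_k) (d : R) :
  (\forall q \near p, is_derive q (ebas R J) G (g q)) -> is_derive p (ebas R I) g d ->
  hess G p I J = d.
Proof.
move=> dG dg; rewrite /hess mxE.
rewrite (near_eq_derive _ (_ : \forall q \near p, derive G q (ebas R J) = g q)).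
  by have [_ ->] := dg.
by apply: filterS dG => q [_ ->].
Qed.

End DirectionalDerivatives.

Section MatrixSquareNorm.
Variable R : realType.

Definition mxsqnorm {p q : nat} (A : 'M[R]_(p, q)) : R :=
  \sum_(i < p) \sum_(j < q) A i j ^+ 2.

Lemma sumr_const_ord q (c : R) : \sum_(i < q) c = q%:R * c.
Proof. by rewrite sumr_const card_ord mulr_natl. Qed.

Lemma ler_sum_const_ord q (F : 'I_q -> R) (c : R) :
  (forall i, F i <= c) -> \sum_i F i <= q%:R * c.
Proof. by move=> le_Fc; rewrite -sumr_const_ord; apply: ler_sum => i _. Qed.

Lemma hs2E k (A : 'M[R]_k) : hs2 A = mxsqnorm A.
Proof. by []. Qed.

Lemma mxsqnorm_ge0 p q (A : 'M[R]_(p, q)) : 0 <= mxsqnorm A.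
Proof. by apply: sumr_ge0 => i _; apply: sumr_ge0 => j _; exact: sqr_ge0. Qed.

Lemma mxsqnormZ p q (a : R) (A : 'M[R]_(p, q)) : mxsqnorm (a *: A) = a ^+ 2 * mxsqnorm A.
Proof.
rewrite /mxsqnorm mulr_sumr; apply: eq_bigr => i _; rewrite mulr_sumr.
by apply: eq_bigr => j _; rewrite mxE exprMn.
Qed.

Lemma mxsqnorm_block p1 p2 q1 q2 (A : 'M[R]_(p1, q1)) (B : 'M[R]_(p1, q2))
    (C : 'M[R]_(p2, q1)) (D : 'M[R]_(p2, q2)) :
  mxsqnorm (block_mx A B C D) = mxsqnorm A + mxsqnorm B + mxsqnorm C + mxsqnorm D.
Proof.
rewrite /mxsqnorm big_split_ord /=.
have top i : \sum_(j < q1 + q2) block_mx A B C D (lshift p2 i) j ^+ 2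
    = \sum_(j < q1) A i j ^+ 2 + \sum_(j < q2) B i j ^+ 2.
  by rewrite big_split_ord; congr (_ + _); apply: eq_bigr => j _;
    rewrite ?block_mxEul ?block_mxEur.
have bot i : \sum_(j < q1 + q2) block_mx A B C D (rshift p1 i) j ^+ 2
    = \sum_(j < q1) C i j ^+ 2 + \sum_(j < q2) D i j ^+ 2.
  by rewrite big_split_ord; congr (_ + _); apply: eq_bigr => j _;
    rewrite ?block_mxEdl ?block_mxEdr.
rewrite (eq_bigr _ (fun i _ => top i)) (eq_bigr _ (fun i _ => bot i)).
by rewrite !big_split /= !addrA.
Qed.

Lemma mxsqnorm_rank1 p q (u : 'I_p -> R) (v : 'I_q -> R) :
  mxsqnorm (\matrix_(i, j) (u i * v j)) = (\sum_i u i ^+ 2) * \sum_j v j ^+ 2.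
Proof.
rewrite /mxsqnorm mulr_suml; apply: eq_bigr => i _; rewrite mulr_sumr.
by apply: eq_bigr => j _; rewrite mxE exprMn.
Qed.

Lemma mxsqnorm_scalar_rank1_le q (lam mu : R) (y : 'I_q -> R) :
  mxsqnorm (\matrix_(a, b) ((a == b)%:R * lam + y a * y b * mu))
    <= 2 * (q%:R * lam ^+ 2) + 2 * (mu ^+ 2 * (\sum_a y a ^+ 2) ^+ 2).
Proof.
have sqrD_le (u v : R) : (u + v) ^+ 2 <= 2 * u ^+ 2 + 2 * v ^+ 2.
  by have := sqr_ge0 (u - v); rewrite sqrrB sqrrD; lra.
have scalarE : mxsqnorm (lam%:M : 'M[R]_q) = q%:R * lam ^+ 2.
  rewrite /mxsqnorm -[RHS]sumr_const_ord; apply: eq_bigr => a _.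
  rewrite (bigD1 a) //= big1 => [|b /negbTE ba].
    by rewrite mxE eqxx addr0.
  by rewrite mxE eq_sym ba expr0n.
have rank1E : mxsqnorm (\matrix_(a, b) ((y a * mu) * y b))
    = mu ^+ 2 * (\sum_a y a ^+ 2) ^+ 2.
  rewrite mxsqnorm_rank1 expr2 mulrA; congr (_ * _).
  by rewrite mulr_sumr; apply: eq_bigr => a _; rewrite exprMn mulrC.
rewrite -scalarE -rank1E mulr_sumr [X in _ + X]mulr_sumr -big_split /=.
apply: ler_sum => a _; rewrite !mulr_sumr -big_split /=.
apply: ler_sum => b _; rewrite !mxE -mulrA [y b * mu]mulrC mulrA.
by rewrite mulr_natl; exact: sqrD_le.
Qed.

Lemma mxsqnormD_dist_le p q (A E : 'M[R]_(p, q)) (alpha eps : R) :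
  (forall i j, `|A i j| <= alpha) -> (forall i j, `|E i j| <= eps) ->
  `|mxsqnorm (A + E) - mxsqnorm A| <= (p * q)%:R * (eps * (2 * alpha + eps)).
Proof.
move=> hA hE; rewrite /mxsqnorm -sumrB natrM -mulrA.
apply: le_trans (ler_norm_sum _ _ _) _; apply: ler_sum_const_ord => i.
rewrite -sumrB; apply: le_trans (ler_norm_sum _ _ _) _.
apply: ler_sum_const_ord => j; rewrite mxE.
have -> : (A i j + E i j) ^+ 2 - A i j ^+ 2 = E i j * (2 * A i j + E i j) by ring.
rewrite normrM; apply: ler_pM => //.
apply: le_trans (ler_normD _ _) _; rewrite normrM ger0_norm //.
by apply: lerD => //; rewrite ler_pM2l.
Qed.

Lemma traceless_scale k (a m : R) (A : 'M[R]_k) :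
  a *: A - (\tr (a *: A) / m)%:M = a *: (A - (\tr A / m)%:M).
Proof. by rewrite mxtraceZ scalerBr scale_scalar_mx mulrA. Qed.

End MatrixSquareNorm.

Section HessModel.
Variables (R : realType) (n N : nat).

Definition hess_model (H rho : 'M[R]_n) (nu nu' : 'I_n -> R) (y : 'I_N -> R) (lam mu : R) :
    'M[R]_(n + N) :=
  block_mx (H + rho) (\matrix_(i, b) (nu i * y b)) (\matrix_(a, j) (y a * nu' j))
    (\matrix_(a, b) ((a == b)%:R * lam + y a * y b * mu)).

Record model_bounds (C0 t : R) (H rho : 'M[R]_n) (nu nu' : 'I_n -> R) (lam mu : R) : Prop :=
  ModelBounds {
    bound_H : forall i j, `|H i j| <= C0;
    bound_rho : forall i j, `|N%:R * rho i j| <= C0;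
    bound_nu : forall i, `|N%:R * nu i| <= C0;
    bound_nu' : forall j, `|N%:R * nu' j| <= C0;
    bound_lam : `|N%:R * (lam - (2 * t)^-1)| <= C0;
    bound_mu : `|N%:R ^+ 2 * mu| <= C0 }.

Lemma mxtrace_hess_model H rho nu nu' y lam mu :
  \tr (hess_model H rho nu nu' y lam mu)
    = \tr H + \tr rho + N%:R * lam + mu * \sum_a y a ^+ 2.
Proof.
rewrite mxtrace_block mxtraceD -!addrA; congr (_ + (_ + _)).
rewrite /mxtrace -sumr_const_ord mulr_sumr -big_split /=.
by apply: eq_bigr => a _; rewrite mxE eqxx mul1r mulrC -expr2.
Qed.

Variables (t1 t2 C0 t lam mu : R) (H rho : 'M[R]_n) (nu nu' : 'I_n -> R) (y : 'I_N -> R).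
Hypotheses (N_ge3 : (3 <= N)%N) (t1_gt0 : 0 < t1) (C0_ge0 : 0 <= C0) (t_in : t1 <= t <= t2)
  (sum_y2 : \sum_a y a ^+ 2 = 2 * N%:R * t)
  (bounds : model_bounds C0 t H rho nu nu' lam mu).

Local Notation M := (hess_model H rho nu nu' y lam mu).
Local Notation theta := (\tr M / (n + N)%:R).

Let N_gt0 : 0 < N%:R :> R. Proof. by rewrite ltr0n; apply: leq_trans N_ge3. Qed.
Let N_ge1 : 1 <= N%:R :> R. Proof. by rewrite ler1n; apply: leq_trans N_ge3. Qed.
Let t_gt0 : 0 < t. Proof. by case/andP: t_in => t1t _; apply: lt_le_trans t1t. Qed.
Let t_le : t <= t2. Proof. by case/andP: t_in. Qed.
Let inv2t_le : (2 * t)^-1 <= (2 * t1)^-1.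
Proof. by case/andP: t_in => t1t _; rewrite lef_pV2 ?posrE ?mulr_gt0 // ler_pM2l. Qed.

Let y2_le a : y a ^+ 2 <= 2 * N%:R * t.
Proof.
rewrite -sum_y2 (bigD1 a) //= lerDl.
by apply: sumr_ge0 => b _; exact: sqr_ge0.
Qed.

Let yy_le a b : `|y a * y b| <= 2 * N%:R * t.
Proof.
have := sqr_ge0 (`|y a| - `|y b|); rewrite sqrrB !real_normK ?num_real // normrM.
by have := y2_le a; have := y2_le b; lra.
Qed.

Let sqrtN_mul_le (w z : R) :
  z ^+ 2 <= 2 * N%:R * t -> `|N%:R * w| <= C0 -> `|Num.sqrt N%:R * (w * z)| <= C0 * (1 + 2 * t).
Proof.
move=> z2_le Nw_le.
have amgm : Num.sqrt N%:R * `|z| <= (N%:R + z ^+ 2) / 2.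
  have := sqr_ge0 (Num.sqrt N%:R - `|z|).
  by rewrite sqrrB sqr_sqrtr ?ler0n // real_normK ?num_real //; lra.
have -> : `|Num.sqrt N%:R * (w * z)| = `|N%:R * w| * (Num.sqrt N%:R * `|z|) / N%:R.
  rewrite !normrM (ger0_norm (sqrtr_ge0 _)) (ger0_norm (ler0n _ _)).
  by field; rewrite gt_eqF.
apply: le_trans (_ : C0 * ((N%:R + 2 * N%:R * t) / 2) / N%:R <= _).
  rewrite ler_pM2r ?invr_gt0 //.
  apply: ler_pM; rewrite ?normr_ge0 ?mulr_ge0 ?sqrtr_ge0 //.
  by apply: le_trans amgm _; lra.
have -> : C0 * ((N%:R + 2 * N%:R * t) / 2) / N%:R = C0 * (1 + 2 * t) / 2.
  by field; rewrite gt_eqF.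
have t0 := t_gt0.
have : 0 <= C0 * (1 + 2 * t) by rewrite mulr_ge0 //; lra.
lra.
Qed.

Lemma hess_model_decomposition : exists Q1 Q2 : 'M[R]_(n + N),
  [/\ offdiag_supp Q1, diag_supp Q2,
      forall i j, `|Q1 i j| <= C0 * (1 + 2 * t2) /\ `|Q2 i j| <= C0 * (1 + 2 * t2)
    & M = block_mx H 0 0 ((2 * t)^-1)%:M + (Num.sqrt N%:R)^-1 *: Q1 + (N%:R)^-1 *: Q2].
Proof.
have sqrtN_gt0 : 0 < Num.sqrt N%:R :> R by rewrite sqrtr_gt0.
move: (t_gt0) (t_le) => t0 tt2.
exists (Num.sqrt N%:R *: block_mx 0 (\matrix_(i, b) (nu i * y b))
                                 (\matrix_(a, j) (y a * nu' j)) 0).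
exists (N%:R *: block_mx rho 0 0
          (\matrix_(a, b) ((a == b)%:R * lam + y a * y b * mu) - ((2 * t)^-1)%:M)).
split.
- by rewrite /offdiag_supp scale_block_mx block_mxKul block_mxKdr !scaler0.
- by rewrite /diag_supp scale_block_mx block_mxKur block_mxKdl !scaler0.
- have C0t_le : C0 * (1 + 2 * t) <= C0 * (1 + 2 * t2) by rewrite ler_wpM2l //; lra.
  have C0t_ge0 : 0 <= C0 * (1 + 2 * t) by rewrite mulr_ge0 //; lra.
  move=> I J; rewrite !scale_block_mx.
  case: (split_ordP I) => [i ->|a ->]; case: (split_ordP J) => [j ->|b ->].
  + rewrite !block_mxEul !mxE mulr0 normr0; split; first lra.
    by apply: le_trans (bound_rho bounds i j) _; rewrite ler_peMr //; lra.
  + rewrite !block_mxEur !mxE mulr0 normr0; split; last lra.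
    exact: le_trans (sqrtN_mul_le (y2_le b) (bound_nu bounds i)) C0t_le.
  + rewrite !block_mxEdl !mxE mulr0 normr0 (mulrC (y a)); split; last lra.
    exact: le_trans (sqrtN_mul_le (y2_le a) (bound_nu' bounds j)) C0t_le.
  + rewrite !block_mxEdr !mxE mulr0 normr0; split; first lra.
    apply: le_trans C0t_le.
    have -> : N%:R * ((a == b)%:R * lam + y a * y b * mu - (2 * t)^-1 *+ (a == b))
        = (a == b)%:R * (N%:R * (lam - (2 * t)^-1)) + N%:R ^+ 2 * mu * (y a * y b) / N%:R.
      by rewrite -[(2 * t)^-1 *+ _]mulr_natl; field; rewrite !gt_eqF.
    apply: le_trans (ler_normD _ _) _.
    have -> : C0 * (1 + 2 * t) = C0 + C0 * (2 * N%:R * t) / N%:R.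
      by field; rewrite gt_eqF.
    apply: lerD.
      rewrite normrM; apply: le_trans (bound_lam bounds).
      by rewrite ler_piMl //; case: (a == b); rewrite ?normr1 ?normr0.
    rewrite normrM normfV (ger0_norm (ler0n _ _)) ler_pM2r ?invr_gt0 // normrM.
    exact: ler_pM (normr_ge0 _) (normr_ge0 _) (bound_mu bounds) (yy_le a b).
- rewrite !scalerA mulVf ?gt_eqF // mulVf ?gt_eqF // !scale1r !add_block_mx.
  by rewrite /hess_model !addr0 !add0r [_%:M + _]addrC subrK.
Qed.

Definition trace_bound : R := n%:R / (2 * t1) + 2 * n%:R * C0 + C0 + 2 * t2 * C0.

Lemma trace_dev_le : `|N%:R * ((2 * t)^-1 - theta)| <= trace_bound.
Proof.
move: (t_gt0) (t_le) (N_ge1) => t0 tt2 N1.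
have nN_gt0 : 0 < (n + N)%:R :> R by rewrite natrD; have := ler0n R n; lra.
have -> : N%:R * ((2 * t)^-1 - theta) = N%:R / (n + N)%:R *
    (n%:R * (2 * t)^-1 - \tr H - \tr rho - N%:R * (lam - (2 * t)^-1) - mu * (2 * N%:R * t)).
  by rewrite mxtrace_hess_model sum_y2 natrD; field; rewrite -natrD !gt_eqF.
have le_n : `|n%:R * (2 * t)^-1| <= n%:R / (2 * t1).
  rewrite normrM ger0_norm // ger0_norm ?invr_ge0; last lra.
  by apply: ler_wpM2l => //; exact: inv2t_le.
have le_trH : `|\tr H| <= n%:R * C0.
  apply: le_trans (ler_norm_sum _ _ _) _.
  by apply: ler_sum_const_ord => i; exact: (bound_H bounds i i).
have le_trrho : `|\tr rho| <= n%:R * C0.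
  apply: le_trans (ler_norm_sum _ _ _) _; apply: ler_sum_const_ord => i.
  apply: le_trans (bound_rho bounds i i); rewrite normrM (ger0_norm (ler0n _ _)).
  by rewrite ler_peMl.
have le_mu : `|mu * (2 * N%:R * t)| <= 2 * t2 * C0.
  have -> : mu * (2 * N%:R * t) = N%:R ^+ 2 * mu * (2 * t / N%:R).
    by field; rewrite gt_eqF.
  rewrite normrM [X in _ <= X]mulrC.
  apply: ler_pM (normr_ge0 _) (normr_ge0 _) (bound_mu bounds) _.
  rewrite ger0_norm; last by apply: divr_ge0 => //; lra.
  by rewrite ler_pdivrMr //; nra.
have le_lam := bound_lam bounds.
have norm_sub4 (a b c d e : R) : `|a - b - c - d - e| <= `|a| + `|b| + `|c| + `|d| + `|e|.
  by do 4 (apply: le_trans (ler_normB _ _) _; rewrite lerD2r).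
rewrite normrM -[trace_bound]mul1r; apply: ler_pM; rewrite ?normr_ge0 //.
  rewrite ger0_norm ?divr_ge0 ?ler0n // ler_pdivrMr // mul1r.
  by rewrite natrD lerDr.
by apply: le_trans (norm_sub4 _ _ _ _ _) _; rewrite /trace_bound; lra.
Qed.

Let normr_le_divN (x K : R) : `|N%:R * x| <= K -> `|x| <= K / N%:R.
Proof. by rewrite ler_pdivlMr // mulrC normrM (ger0_norm (ler0n _ _)). Qed.

Definition xx_bound : R :=
  (C0 + trace_bound) * (2 * (C0 + (2 * t1)^-1) + (C0 + trace_bound)).

Lemma mxsqnorm_xx_dev :
  `|mxsqnorm (H + rho - theta%:M) - mxsqnorm (H - ((2 * t)^-1)%:M)|
    <= (n * n)%:R * (xx_bound / N%:R).
Proof.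
have K_ge0 : 0 <= C0 + trace_bound.
  by rewrite addr_ge0 //; exact: le_trans (normr_ge0 _) trace_dev_le.
have inv2t_ge0 : 0 <= (2 * t)^-1 by rewrite invr_ge0 mulr_ge0 // ltW.
have -> : H + rho - theta%:M = (H - ((2 * t)^-1)%:M) + (rho + ((2 * t)^-1 - theta)%:M).
  by apply/matrixP => i j; rewrite !mxE; case: (i == j); rewrite ?mulr1n ?mulr0n; ring.
apply: le_trans (mxsqnormD_dist_le (alpha := C0 + (2 * t1)^-1)
                   (eps := (C0 + trace_bound) / N%:R) _ _) _.
- move=> i j; rewrite !mxE; apply: le_trans (ler_normB _ _) _.
  apply: lerD; first exact: (bound_H bounds i j).
  case: (i == j); rewrite ?mulr1n ?mulr0n ?normr0; first by rewrite ger0_norm // inv2t_le.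
  by rewrite invr_ge0 mulr_ge0 // ltW.
- move=> i j; rewrite !mxE; apply: le_trans (ler_normD _ _) _.
  rewrite [(C0 + _) / _]mulrDl.
  apply: lerD; first exact: normr_le_divN (bound_rho bounds i j).
  case: (i == j); rewrite ?mulr1n ?mulr0n ?normr0.
    exact: normr_le_divN trace_dev_le.
  by rewrite divr_ge0 //; exact: le_trans (normr_ge0 _) trace_dev_le.
apply: ler_wpM2l => //; rewrite /xx_bound mulrAC.
rewrite ler_pM2r ?invr_gt0 //; apply: ler_wpM2l => //.
by rewrite lerD2l ler_pdivrMr // ler_peMr.
Qed.

Lemma mxsqnorm_offdiag_le :
  mxsqnorm (\matrix_(i, b) (nu i * y b)) + mxsqnorm (\matrix_(a, j) (y a * nu' j))
    <= 2 * (n%:R * (2 * t2 * C0 ^+ 2)) / N%:R.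
Proof.
move: (t_gt0) (t_le) => t0 tt2.
have sum_le (w : 'I_n -> R) : (forall i, `|N%:R * w i| <= C0) ->
    (\sum_i w i ^+ 2) * (2 * N%:R * t) <= n%:R * (2 * t2 * C0 ^+ 2) / N%:R.
  move=> bound_w.
  have sum_w2 : \sum_i w i ^+ 2 <= n%:R * (C0 / N%:R) ^+ 2.
    apply: ler_sum_const_ord => i.
    rewrite -real_normK ?num_real // ler_sqr ?nnegrE ?divr_ge0 //.
    exact: normr_le_divN (bound_w i).
  apply: le_trans (ler_wpM2r _ sum_w2) _; first by rewrite mulr_ge0 // ltW.
  have -> : n%:R * (C0 / N%:R) ^+ 2 * (2 * N%:R * t) = n%:R * (2 * t * C0 ^+ 2) / N%:R.
    by field; rewrite gt_eqF.
  rewrite ler_pM2r ?invr_gt0 //; apply: ler_wpM2l => //.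
  by rewrite ler_wpM2r ?sqr_ge0 // ler_pM2l.
rewrite !mxsqnorm_rank1 sum_y2 [X in _ + X]mulrC.
have := sum_le nu (bound_nu bounds); have := sum_le nu' (bound_nu' bounds).
lra.
Qed.

Lemma mxsqnorm_yy_dev :
  mxsqnorm (\matrix_(a, b) ((a == b)%:R * lam + y a * y b * mu) - theta%:M)
    <= (2 * (C0 + trace_bound) ^+ 2 + 8 * t2 ^+ 2 * C0 ^+ 2) / N%:R.
Proof.
move: (t_gt0) (t_le) => t0 tt2.
have -> : \matrix_(a, b) ((a == b)%:R * lam + y a * y b * mu) - theta%:M
    = \matrix_(a, b) ((a == b)%:R * (lam - theta) + y a * y b * mu).
  by apply/matrixP => a b; rewrite !mxE; case: (a == b); rewrite ?mulr1n ?mulr0n; ring.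
apply: le_trans (mxsqnorm_scalar_rank1_le _ _ _) _; rewrite sum_y2.
have K_ge0 : 0 <= C0 + trace_bound.
  by rewrite addr_ge0 //; exact: le_trans (normr_ge0 _) trace_dev_le.
have le_lam : N%:R * (lam - theta) ^+ 2 <= (C0 + trace_bound) ^+ 2 / N%:R.
  have le_Nlam : `|N%:R * (lam - theta)| <= C0 + trace_bound.
    have -> : N%:R * (lam - theta)
        = N%:R * (lam - (2 * t)^-1) + N%:R * ((2 * t)^-1 - theta) by ring.
    apply: le_trans (ler_normD _ _) _.
    exact: lerD (bound_lam bounds) trace_dev_le.
  set d := lam - theta.
  have -> : N%:R * d ^+ 2 = (N%:R * d) ^+ 2 / N%:R by field; rewrite gt_eqF.
  by rewrite ler_pM2r ?invr_gt0 // -real_normK ?num_real // ler_sqr ?nnegrE.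
have le_mu : mu ^+ 2 * (2 * N%:R * t) ^+ 2 <= 4 * t2 ^+ 2 * C0 ^+ 2 / N%:R.
  have -> : mu ^+ 2 * (2 * N%:R * t) ^+ 2 = (N%:R ^+ 2 * mu * (2 * t)) ^+ 2 / N%:R / N%:R.
    by field; rewrite gt_eqF.
  have -> : 4 * t2 ^+ 2 * C0 ^+ 2 = (C0 * (2 * t2)) ^+ 2 by ring.
  apply: le_trans (_ : (C0 * (2 * t2)) ^+ 2 / N%:R / N%:R <= _).
    rewrite !ler_pM2r ?invr_gt0 // -real_normK ?num_real // ler_sqr ?nnegrE.
    - by rewrite normrM ler_pM // ?(bound_mu bounds) // ger0_norm; lra.
    - exact: normr_ge0.
    - by rewrite mulr_ge0 //; lra.
  by rewrite ler_piMr ?divr_ge0 ?sqr_ge0 // invf_le1.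
lra.
Qed.

Definition hs_bound : R :=
  (n * n)%:R * xx_bound + 2 * (n%:R * (2 * t2 * C0 ^+ 2))
  + (2 * (C0 + trace_bound) ^+ 2 + 8 * t2 ^+ 2 * C0 ^+ 2).

Lemma hs2_hess_model_dev :
  `|hs2 (M - theta%:M) - hs2 (H - ((2 * t)^-1)%:M)| <= hs_bound / N%:R.
Proof.
have := mxsqnorm_ge0 (\matrix_(a, b) ((a == b)%:R * lam + y a * y b * mu) - theta%:M).
have := mxsqnorm_ge0 (\matrix_(i, b) (nu i * y b)).
have := mxsqnorm_ge0 (\matrix_(a, j) (y a * nu' j)).
have := mxsqnorm_yy_dev; have := mxsqnorm_offdiag_le; have := mxsqnorm_xx_dev.
rewrite !hs2E; set th := theta; rewrite /hess_model (scalar_mx_block n N th).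
rewrite opp_block_mx add_block_mx !oppr0 !addr0 mxsqnorm_block /hs_bound.
rewrite !ler_norml => /andP[xx_lo xx_hi] offdiag_le yy_dev_le ? ? ?.
by apply/andP; split; lra.
Qed.

End HessModel.

Lemma hess_model_estimates (R : realType) (n : nat) (t1 t2 C0 : R) :
  0 < t1 -> 0 <= C0 -> exists2 C : R, 0 < C &
  forall (N : nat) (t lam mu : R) (H rho : 'M[R]_n) (nu nu' : 'I_n -> R) (y : 'I_N -> R),
    (3 <= N)%N -> t1 <= t <= t2 -> \sum_a y a ^+ 2 = 2 * N%:R * t ->
    model_bounds N C0 t H rho nu nu' lam mu ->
    let M := hess_model H rho nu nu' y lam mu in
    (exists Q1 Q2 : 'M[R]_(n + N),
      [/\ offdiag_supp Q1, diag_supp Q2, forall i j, `|Q1 i j| <= C /\ `|Q2 i j| <= C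
        & M = block_mx H 0 0 ((2 * t)^-1)%:M + (Num.sqrt N%:R)^-1 *: Q1 + (N%:R)^-1 *: Q2])
    /\ `|hs2 (M - (\tr M / (n + N)%:R)%:M) - hs2 (H - ((2 * t)^-1)%:M)| <= C / N%:R.
Proof.
move=> t1_gt0 C0_ge0; set CQ := C0 * (1 + 2 * t2); set CE := hs_bound n t1 t2 C0.
have le_CQ : CQ <= 1 + `|CQ| + `|CE|.
  by rewrite -addrA addrCA ler_wpDr ?addr_ge0 // ler_norm.
have le_CE : CE <= 1 + `|CQ| + `|CE| by rewrite ler_wpDl ?addr_ge0 // ler_norm.
exists (1 + `|CQ| + `|CE|) => [|N t lam mu H rho nu nu' y N_ge3 t_in sum_y2 bounds M].
  by apply: lt_le_trans ltr01 _; rewrite -addrA lerDl addr_ge0.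
split.
  have [Q1 [Q2 [offQ1 diagQ2 bQ eqM]]] :=
    hess_model_decomposition N_ge3 t1_gt0 C0_ge0 t_in sum_y2 bounds.
  exists Q1, Q2; split => // i j.
  by have [? ?] := bQ i j; split; exact: le_trans le_CQ.
apply: le_trans (hs2_hess_model_dev N_ge3 t1_gt0 C0_ge0 t_in sum_y2 bounds) _.
by rewrite ler_pM2r ?invr_gt0 ?ltr0n //; apply: leq_trans N_ge3.
Qed.

Lemma sum_delta_mul (R : pzSemiRingType) (I : finType) (g : I -> R) (a : I) :
  \sum_b ((a == b)%:R * g b) = g a.
Proof.
rewrite (bigD1 a) //= eqxx mul1r big1 ?addr0 // => b /negbTE.
by rewrite eq_sym => ->; rewrite mul0r.
Qed.

Section BlockCoordinates.
Variables (R : realType) (n N : nat).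
Local Notation V := 'rV[R]_(n + N).

Definition xdir (i : 'I_n) : V := ebas R (lshift N i).
Definition ydir (a : 'I_N) : V := ebas R (rshift n a).
Definition ycoord (a : 'I_N) (q : V) : R := rsubmx q 0 a.
Definition ysqr (q : V) : R := \sum_a ycoord a q ^+ 2.
Definition ytau (q : V) : R := ysqr q / (2 * N%:R).

Lemma lsubmx_xdir h i (q : V) : lsubmx (h *: xdir i + q) = h *: ebas R i + lsubmx q.
Proof. by apply/rowP => j; rewrite !mxE eq_lshift. Qed.

Lemma rsubmx_xdir h i (q : V) : rsubmx (h *: xdir i + q) = rsubmx q.
Proof. by apply/rowP => j; rewrite !mxE eq_sym eq_lrshift /= mulr0 add0r. Qed.

Lemma lsubmx_ydir h a (q : V) : lsubmx (h *: ydir a + q) = lsubmx q.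
Proof. by apply/rowP => j; rewrite !mxE eq_lrshift /= mulr0 add0r. Qed.

Lemma ycoord_ydir h a b (q : V) : ycoord b (h *: ydir a + q) = h * (a == b)%:R + ycoord b q.
Proof. by rewrite /ycoord !mxE eq_rshift /= eq_sym. Qed.

Lemma ysqr_ge0 (q : V) : 0 <= ysqr q.
Proof. by apply: sumr_ge0 => a _; exact: sqr_ge0. Qed.

Lemma enorm_rsubmx_sqr (q : V) : enorm (rsubmx q) ^+ 2 = ysqr q.
Proof. exact: sqr_sqrtr (ysqr_ge0 q). Qed.

Lemma ysqr_xdir h i (q : V) : ysqr (h *: xdir i + q) = ysqr q.
Proof. by rewrite /ysqr /ycoord rsubmx_xdir. Qed.

Lemma ysqr_ydir h a (q : V) :
  ysqr (h *: ydir a + q) = ysqr q + h * (2 * ycoord a q) + h ^+ 2 * 1.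
Proof.
rewrite /ysqr; under eq_bigr => b _ do rewrite ycoord_ydir.
have expand b : (h * (a == b)%:R + ycoord b q) ^+ 2 = ycoord b q ^+ 2
    + ((a == b)%:R * (h * 2 * ycoord b q) + (a == b)%:R * h ^+ 2).
  by case: (a == b) => /=; ring.
under eq_bigr => b _ do rewrite expand.
by rewrite big_split /= big_split /= !sum_delta_mul; ring.
Qed.

Lemma is_derive_ycoord_xdir (q : V) i b : is_derive q (xdir i) (ycoord b) 0.
Proof. by apply: (is_derive_quadratic (k := 0)) => h; rewrite /ycoord rsubmx_xdir; ring. Qed.

Lemma is_derive_ycoord_ydir (q : V) a b : is_derive q (ydir a) (ycoord b) (a == b)%:R.
Proof. by apply: (is_derive_quadratic (k := 0)) => h; rewrite ycoord_ydir; ring. Qed.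

Lemma is_derive_ysqr_xdir (q : V) i : is_derive q (xdir i) ysqr 0.
Proof. by apply: (is_derive_quadratic (k := 0)) => h; rewrite ysqr_xdir; ring. Qed.

Lemma is_derive_ysqr_ydir (q : V) a : is_derive q (ydir a) ysqr (2 * ycoord a q).
Proof. by apply: (is_derive_quadratic (k := 1)) => h; rewrite ysqr_ydir. Qed.

Lemma is_derive_ytau_ydir (q : V) a : is_derive q (ydir a) ytau (ycoord a q / N%:R).
Proof.
have N_neq0 : N%:R != 0 :> R by rewrite pnatr_eq0 -lt0n (leq_ltn_trans (leq0n a)).
apply: (is_derive_quadratic (k := (2 * N%:R)^-1)) => h.
by rewrite /ytau ysqr_ydir; field.
Qed.

Lemma ytau_continuous (q : V) : {for q, continuous ytau}.
Proof.
apply: differentiable_continuous.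
have -> : ytau = (\sum_(a < N) (fun q' : V => q' 0 (rshift n a)) ^+ 2) * cst (2 * N%:R)^-1.
  apply/funext => q'; rewrite /ytau /ysqr /= fct_sumE /ycoord.
  by congr (_ * _); apply: eq_bigr => a _; rewrite mxE.
apply: differentiableM; last exact: differentiable_cst.
apply: differentiable_sum => a; apply: differentiableX.
exact: differentiable_coord.
Qed.

Lemma near_ytau_gt0 (p : V) : 0 < ytau p -> \forall q \near p, 0 < ytau q.
Proof. by move=> ytau_gt0; exact: (cvgr_gt _ (@ytau_continuous p) _ ytau_gt0). Qed.

Variable f : 'rV[R]_n -> R -> R.

Definition kappa : R := 2 / ((n + N)%:R - 2).
Definition fder (l : seq (option 'I_n)) (q : V) : R := iter_partial f l (lsubmx q) (ytau q).
Definition expkf (q : V) : R := expR (kappa * fder [::] q).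
Definition bsq_closed (q : V) : R := ysqr q * expkf q.

Lemma bsq_closedE : (3 <= N)%N -> bsq f = bsq_closed.
Proof.
move=> N_ge3; apply/funext => q.
have m_gt2 : 2 < (n + N)%:R :> R.
  by rewrite ltr_nat; apply: leq_trans N_ge3 (leq_addl _ _).
have m2_neq0 : 2 - (n + N)%:R != 0 :> R by rewrite subr_eq0 lt_eqF.
have inv_m2_neq0 : 1 / (2 - (n + N)%:R) != 0 :> R by rewrite div1r invr_eq0.
rewrite /bsq /bfun /vfun /bsq_closed /expkf /fder /ytau.
have -> : enorm (rsubmx q) = Num.sqrt (ysqr q) by [].
rewrite sqr_sqrtr ?ysqr_ge0 //.
(* At y = 0 both sides vanish: 0 `^ a = 0 for a <> 0. *)
have [->|ysqr_neq0] := eqVneq (ysqr q) 0.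
  by rewrite sqrtr0 powR0 // mul0r powR0 // expr0n mul0r.
rewrite powRM ?powR_ge0 ?expR_ge0 // -powRrM div1r mulfV // powRr1 ?sqrtr_ge0 //.
rewrite -expRM exprMn sqr_sqrtr ?ysqr_ge0 // -expRM_natr; congr (_ * expR _).
by rewrite /kappa /=; field; rewrite -natrD m2_neq0 andbT subr_eq0 gt_eqF.
Qed.

Hypothesis f_smooth : smooth_pos f.

(* A step along x_i leaves t fixed and a step along y_a leaves x fixed, so the separate
   derivability in x and in t provided by smooth_pos is all that is needed. *)

Lemma is_derive_fder_xdir l (q : V) i :
  0 < ytau q -> is_derive q (xdir i) (fder l) (fder (Some i :: l) q).
Proof.
move=> ytau_gt0; have [_ [dx _]] := f_smooth l (lsubmx q) ytau_gt0.
apply: (is_derive_line_transfer (P := fun x => iter_partial f l x (ytau q))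
          (b := lsubmx q) (w := ebas R i)).
  by move=> h; rewrite /fder lsubmx_xdir /ytau ysqr_xdir.
exact: DeriveDef (dx i) _.
Qed.

Lemma is_derive_fder_ydir l (q : V) a : 0 < ytau q ->
  is_derive q (ydir a) (fder l) (fder (None :: l) q * (ycoord a q / N%:R)).
Proof.
move=> ytau_gt0; have [_ [_ dt]] := f_smooth l (lsubmx q) ytau_gt0.
apply: (is_derive_line_transfer (P := fun q' => iter_partial f l (lsubmx q) (ytau q'))
          (b := q) (w := ydir a)).
  by move=> h; rewrite /fder lsubmx_ydir.
exact: is_derive_comp_real (is_derive_ytau_ydir q a) (DeriveDef dt _).
Qed.

Lemma is_derive_expkf_xdir (q : V) i : 0 < ytau q ->
  is_derive q (xdir i) expkf (expkf q * (kappa * fder [:: Some i] q)).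
Proof.
move=> ytau_gt0; apply: is_derive_eq (is_derive_comp_real
  (is_derive_mul (is_derive_cst kappa q (xdir i)) (is_derive_fder_xdir [::] i ytau_gt0))
  (is_derive_expR _)) _.
by rewrite /expkf /cst; ring.
Qed.

Lemma is_derive_expkf_ydir (q : V) a : 0 < ytau q ->
  is_derive q (ydir a) expkf (expkf q * (kappa * (fder [:: None] q * (ycoord a q / N%:R)))).
Proof.
move=> ytau_gt0; apply: is_derive_eq (is_derive_comp_real
  (is_derive_mul (is_derive_cst kappa q (ydir a)) (is_derive_fder_ydir [::] a ytau_gt0))
  (is_derive_expR _)) _.
by rewrite /expkf /cst; ring.
Qed.

Definition dx_bsq (j : 'I_n) (q : V) : R := ysqr q * expkf q * kappa * fder [:: Some j] q.
Definition dy_bsq (b : 'I_N) (q : V) : R :=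
  2 * ycoord b q * expkf q + ysqr q * expkf q * kappa * fder [:: None] q * (ycoord b q / N%:R).

Lemma is_derive_bsq_xdir (q : V) j :
  0 < ytau q -> is_derive q (xdir j) bsq_closed (dx_bsq j q).
Proof.
move=> ytau_gt0.
apply: is_derive_eq (is_derive_mul (is_derive_ysqr_xdir q j) (is_derive_expkf_xdir j ytau_gt0)) _.
by rewrite /dx_bsq; ring.
Qed.

Lemma is_derive_bsq_ydir (q : V) b :
  0 < ytau q -> is_derive q (ydir b) bsq_closed (dy_bsq b q).
Proof.
move=> ytau_gt0.
apply: is_derive_eq (is_derive_mul (is_derive_ysqr_ydir q b) (is_derive_expkf_ydir b ytau_gt0)) _.
by rewrite /dy_bsq; ring.
Qed.

Lemma is_derive_dx_bsq (q v : V) j (dys dexp dF : R) :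
  is_derive q v ysqr dys -> is_derive q v expkf dexp -> is_derive q v (fder [:: Some j]) dF ->
  is_derive q v (dx_bsq j) (kappa * (dys * expkf q * fder [:: Some j] q
    + ysqr q * dexp * fder [:: Some j] q + ysqr q * expkf q * dF)).
Proof.
move=> dysqr dexpkf dfder.
apply: is_derive_eq (is_derive_mul
  (is_derive_mul (is_derive_mul dysqr dexpkf) (is_derive_cst kappa q v)) dfder) _.
by rewrite /cst; ring.
Qed.

Lemma is_derive_dy_bsq (q v : V) b (dyc dys dexp dF : R) :
  is_derive q v (ycoord b) dyc -> is_derive q v ysqr dys -> is_derive q v expkf dexp ->
  is_derive q v (fder [:: None]) dF ->
  is_derive q v (dy_bsq b) (2 * (dyc * expkf q + ycoord b q * dexp)
    + kappa / N%:R * (dys * expkf q * fder [:: None] q * ycoord b q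
      + ysqr q * dexp * fder [:: None] q * ycoord b q
      + ysqr q * expkf q * dF * ycoord b q + ysqr q * expkf q * fder [:: None] q * dyc)).
Proof.
move=> dycoord dysqr dexpkf dfder.
apply: is_derive_eq (is_derive_add
  (is_derive_mul (is_derive_mul (is_derive_cst (2 : R) q v) dycoord) dexpkf)
  (is_derive_mul (is_derive_mul (is_derive_mul (is_derive_mul dysqr dexpkf)
     (is_derive_cst kappa q v)) dfder)
     (is_derive_mul dycoord (is_derive_cst (N%:R^-1 : R) q v)))) _.
by rewrite /cst; ring.
Qed.

Definition rho_xx (p : V) : 'M[R]_n := \matrix_(i, j)
  ((N%:R * kappa / 2 - 1) * fder [:: Some i; Some j] p
   + N%:R / 2 * kappa ^+ 2 * fder [:: Some i] p * fder [:: Some j] p).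
Definition nu_xy (p : V) (i : 'I_n) : R :=
  kappa * fder [:: Some i] p / (2 * ytau p)
  + kappa ^+ 2 * fder [:: Some i] p * fder [:: None] p / 2 + kappa * fder [:: Some i; None] p / 2.
Definition nu_yx (p : V) (j : 'I_n) : R :=
  kappa * fder [:: Some j] p / (2 * ytau p)
  + kappa ^+ 2 * fder [:: None] p * fder [:: Some j] p / 2 + kappa * fder [:: None; Some j] p / 2.
Definition lam_yy (p : V) : R := (2 * ytau p)^-1 + kappa * fder [:: None] p / 2.
Definition mu_yy (p : V) : R :=
  (4 * kappa * fder [:: None] p + 2 * ytau p * kappa ^+ 2 * fder [:: None] p ^+ 2
   + 2 * ytau p * kappa * fder [:: None; None] p) / (2 * ysqr p).

Lemma hess_bsq_closed (p : V) : (0 < N)%N -> 0 < ysqr p ->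
  hess bsq_closed p = (2 * bsq_closed p / N%:R) *:
    hess_model (hessx f (lsubmx p) (ytau p)) (rho_xx p) (nu_xy p) (nu_yx p) (ycoord^~ p)
      (lam_yy p) (mu_yy p).
Proof.
move=> N_gt0 ysqr_gt0.
have ytau_gt0 : 0 < ytau p by rewrite divr_gt0 // mulr_gt0 // ltr0n.
have N_neq0 : N%:R != 0 :> R by rewrite pnatr_eq0 -lt0n.
have ysqr_neq0 : ysqr p != 0 by rewrite gt_eqF.
have dx j : \forall q \near p, is_derive q (xdir j) bsq_closed (dx_bsq j q).
  by apply: filterS (near_ytau_gt0 ytau_gt0) => q; exact: is_derive_bsq_xdir.
have dy b : \forall q \near p, is_derive q (ydir b) bsq_closed (dy_bsq b q).
  by apply: filterS (near_ytau_gt0 ytau_gt0) => q; exact: is_derive_bsq_ydir.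
have dysqr_x i := is_derive_ysqr_xdir p i; have dysqr_y a := is_derive_ysqr_ydir p a.
have dexp_x i := is_derive_expkf_xdir i ytau_gt0.
have dexp_y a := is_derive_expkf_ydir a ytau_gt0.
apply/matrixP => I J; rewrite [RHS]mxE /hess_model.
case: (split_ordP I) => [i ->|a ->]; case: (split_ordP J) => [j ->|b ->].
- apply: hess_is_derive (dx j) _.
  apply: is_derive_eq (is_derive_dx_bsq (dysqr_x i) (dexp_x i)
    (is_derive_fder_xdir _ i ytau_gt0)) _.
  rewrite block_mxEul !mxE -/(fder [:: Some i; Some j] p) /bsq_closed /ytau.
  by field; rewrite ?N_neq0 ?ysqr_neq0.
- apply: hess_is_derive (dy b) _.
  apply: is_derive_eq (is_derive_dy_bsq (is_derive_ycoord_xdir p i b) (dysqr_x i) (dexp_x i)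
    (is_derive_fder_xdir _ i ytau_gt0)) _.
  rewrite block_mxEur !mxE /= /bsq_closed /nu_xy /ytau.
  by field; rewrite ?N_neq0 ?ysqr_neq0.
- apply: hess_is_derive (dx j) _.
  apply: is_derive_eq (is_derive_dx_bsq (dysqr_y a) (dexp_y a)
    (is_derive_fder_ydir _ a ytau_gt0)) _.
  rewrite block_mxEdl !mxE /= /bsq_closed /nu_yx /ytau.
  by field; rewrite ?N_neq0 ?ysqr_neq0.
- apply: hess_is_derive (dy b) _.
  apply: is_derive_eq (is_derive_dy_bsq (is_derive_ycoord_ydir p a b) (dysqr_y a) (dexp_y a)
    (is_derive_fder_ydir _ a ytau_gt0)) _.
  rewrite block_mxEdr !mxE /= /bsq_closed /lam_yy /mu_yy /ytau.
  by field; rewrite ?N_neq0 ?ysqr_neq0.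
Qed.

End BlockCoordinates.

Section PowerBounds.
Variable R : realType.

(* Bounding every factor by a power of a single W >= 2 lets bounds of sums and products
   compose without tracking constants. *)
Definition powbounded (W : R) (k : nat) (x : R) : Prop := `|x| <= W ^+ k.

Lemma powboundedM W a b x y :
  powbounded W a x -> powbounded W b y -> powbounded W (a + b) (x * y).
Proof. by rewrite /powbounded normrM exprD => le_x le_y; apply: ler_pM. Qed.

Lemma powboundedD W a b x y : 2 <= W ->
  powbounded W a x -> powbounded W b y -> powbounded W (maxn a b).+1 (x + y).
Proof.
rewrite /powbounded => W_ge2 le_x le_y.
have W_ge1 : 1 <= W by apply: le_trans W_ge2; rewrite ler1n.
have le_a : W ^+ a <= W ^+ maxn a b by rewrite ler_weXn2l // leq_maxl.
have le_b : W ^+ b <= W ^+ maxn a b by rewrite ler_weXn2l // leq_maxr.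
have Wmax_ge0 : 0 <= W ^+ maxn a b by rewrite exprn_ge0 // (le_trans ler01 W_ge1).
apply: le_trans (ler_normD _ _) _; rewrite exprS.
apply: le_trans (_ : 2 * W ^+ maxn a b <= _); first lra.
by rewrite ler_wpM2r.
Qed.

Lemma powbounded_le W a b x : 1 <= W -> (a <= b)%N -> powbounded W a x -> powbounded W b x.
Proof. by rewrite /powbounded => W_ge1 le_ab le_x; apply: le_trans le_x (ler_weXn2l _ _). Qed.

End PowerBounds.

Section CoefficientBounds.
Variables (R : realType) (n N : nat) (f : 'rV[R]_n -> R -> R) (p : 'rV[R]_(n + N)) (W t1 : R).
Hypotheses (N_ge3 : (3 <= N)%N) (n_ge1 : (1 <= n)%N) (W_ge2 : 2 <= W) (nW : n%:R + 2 <= W)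
  (t1_gt0 : 0 < t1) (t1_le : t1 <= ytau p) (t1W : t1^-1 <= W)
  (fder_le : forall d e : option 'I_n, `|fder f [:: d] p| <= W /\ `|fder f [:: d; e] p| <= W).

Local Notation kappa := (kappa R n N).

Let W_ge1 : 1 <= W. Proof. by apply: le_trans W_ge2; rewrite ler1n. Qed.
Let N_gt0 : 0 < N%:R :> R. Proof. by rewrite ltr0n; apply: leq_trans N_ge3. Qed.
Let N_ge3R : 3 <= N%:R :> R. Proof. by rewrite (ler_nat R 3 N). Qed.
Let n_ge1R : 1 <= n%:R :> R. Proof. by rewrite (ler_nat R 1 n). Qed.
Let m2_gt0 : 0 < (n + N)%:R - 2 :> R.
Proof. by move: N_ge3R n_ge1R; rewrite natrD; lra. Qed.
Let ytau_gt0 : 0 < ytau p. Proof. exact: lt_le_trans t1_le. Qed.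

Let F1 d : powbounded W 1 (fder f [:: d] p). Proof. exact: (fder_le d d).1. Qed.
Let F2 d e : powbounded W 1 (fder f [:: d; e] p). Proof. exact: (fder_le d e).2. Qed.

Let Nkappa_pb : powbounded W 1 (N%:R * kappa).
Proof.
move: (N_ge3R) (n_ge1R) (m2_gt0) => N3 n1 m2.
rewrite /powbounded expr1 /kappa ger0_norm; last by rewrite mulr_ge0 // divr_ge0 // ltW.
rewrite mulrA ler_pdivrMr // natrD.
apply: le_trans (_ : 3 * (n%:R + N%:R - 2) <= _); first lra.
by apply: ler_wpM2r; move: nW; lra.
Qed.

Let kappa_pb : powbounded W 0 kappa.
Proof.
move: (N_ge3R) (n_ge1R) (m2_gt0) => N3 n1 m2.
rewrite /powbounded expr0 /kappa ger0_norm; last by rewrite divr_ge0 // ltW.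
by rewrite ler_pdivrMr // mul1r natrD; rewrite natrD in m2; lra.
Qed.

Let half_pb : powbounded W 0 (1 / 2).
Proof. by rewrite /powbounded expr0 ger0_norm ?divr_ge0 // ler_pdivrMr // mul1r ler1n. Qed.

Let n2_pb : powbounded W 1 ((2 - n%:R) / 2).
Proof.
move: (nW) (ler0n R n) => Wn n_ge0.
rewrite /powbounded expr1 normrM [`|2^-1|]ger0_norm ?invr_ge0 //.
have : `|2 - n%:R| <= n%:R + 2 :> R by rewrite ler_norml; apply/andP; split; lra.
by rewrite -ler_pdivlMr //; lra.
Qed.

Let inv_ytau_pb : powbounded W 1 (ytau p)^-1.
Proof.
move: (ytau_gt0) => ytau_pos.
rewrite /powbounded expr1 ger0_norm; last by rewrite invr_ge0 ltW.
by apply: le_trans t1W; rewrite lef_pV2.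
Qed.

Let inv_2ytau_pb : powbounded W 1 (2 * ytau p)^-1.
Proof.
move: (ytau_gt0) (t1_le) (t1_gt0) => ytau_pos t1_ytau t1_pos.
rewrite /powbounded expr1 ger0_norm; last by rewrite invr_ge0 mulr_ge0 // ltW.
by apply: le_trans t1W; rewrite lef_pV2 ?posrE; lra.
Qed.

Let pb_le6 k x : powbounded W k x -> (k <= 6)%N -> `|x| <= W ^+ 6.
Proof. by move=> pb_x le_k6; apply: powbounded_le pb_x. Qed.

Let ytau_neq0 : ytau p != 0. Proof. by rewrite gt_eqF. Qed.

Let bound_rho_xx i j : `|N%:R * rho_xx f p i j| <= W ^+ 6.
Proof.
have m2 := m2_gt0; rewrite mxE.
have -> : N%:R * ((N%:R * kappa / 2 - 1) * fder f [:: Some i; Some j] p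
    + N%:R / 2 * kappa ^+ 2 * fder f [:: Some i] p * fder f [:: Some j] p)
  = N%:R * kappa * ((2 - n%:R) / 2) * fder f [:: Some i; Some j] p
    + N%:R * kappa * (N%:R * kappa) * (1 / 2) * fder f [:: Some i] p * fder f [:: Some j] p.
  by rewrite /kappa; field; rewrite -natrD gt_eqF.
exact: pb_le6 (powboundedD W_ge2 (powboundedM (powboundedM Nkappa_pb n2_pb) (F2 _ _))
  (powboundedM (powboundedM (powboundedM (powboundedM Nkappa_pb Nkappa_pb) half_pb)
    (F1 _)) (F1 _))) isT.
Qed.

Let bound_nu_xy i : `|N%:R * nu_xy f p i| <= W ^+ 6.
Proof.
have -> : N%:R * nu_xy f p i
  = N%:R * kappa * fder f [:: Some i] p * (2 * ytau p)^-1
    + N%:R * kappa * kappa * fder f [:: Some i] p * fder f [:: None] p * (1 / 2)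
    + N%:R * kappa * fder f [:: Some i; None] p * (1 / 2).
  by rewrite /nu_xy; field; rewrite ytau_neq0.
exact: pb_le6 (powboundedD W_ge2 (powboundedD W_ge2
  (powboundedM (powboundedM Nkappa_pb (F1 _)) inv_2ytau_pb)
  (powboundedM (powboundedM (powboundedM (powboundedM Nkappa_pb kappa_pb) (F1 _)) (F1 _))
    half_pb))
  (powboundedM (powboundedM Nkappa_pb (F2 _ _)) half_pb)) isT.
Qed.

Let bound_nu_yx j : `|N%:R * nu_yx f p j| <= W ^+ 6.
Proof.
have -> : N%:R * nu_yx f p j
  = N%:R * kappa * fder f [:: Some j] p * (2 * ytau p)^-1
    + N%:R * kappa * kappa * fder f [:: None] p * fder f [:: Some j] p * (1 / 2)
    + N%:R * kappa * fder f [:: None; Some j] p * (1 / 2).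
  by rewrite /nu_yx; field; rewrite ytau_neq0.
exact: pb_le6 (powboundedD W_ge2 (powboundedD W_ge2
  (powboundedM (powboundedM Nkappa_pb (F1 _)) inv_2ytau_pb)
  (powboundedM (powboundedM (powboundedM (powboundedM Nkappa_pb kappa_pb) (F1 _)) (F1 _))
    half_pb))
  (powboundedM (powboundedM Nkappa_pb (F2 _ _)) half_pb)) isT.
Qed.

Let bound_lam_yy : `|N%:R * (lam_yy f p - (2 * ytau p)^-1)| <= W ^+ 6.
Proof.
have -> : N%:R * (lam_yy f p - (2 * ytau p)^-1) = N%:R * kappa * fder f [:: None] p * (1 / 2).
  by rewrite /lam_yy; field.
exact: pb_le6 (powboundedM (powboundedM Nkappa_pb (F1 _)) half_pb) isT.
Qed.

Let bound_mu_yy : `|N%:R ^+ 2 * mu_yy f p| <= W ^+ 6.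
Proof.
have ysqr_neq0 : ysqr p != 0 by move: ytau_neq0; rewrite /ytau mulf_eq0 negb_or => /andP[].
have -> : N%:R ^+ 2 * mu_yy f p
  = N%:R * kappa * fder f [:: None] p * (ytau p)^-1
    + N%:R * kappa * kappa * fder f [:: None] p * fder f [:: None] p * (1 / 2)
    + N%:R * kappa * fder f [:: None; None] p * (1 / 2).
  by rewrite /mu_yy /ytau; field; rewrite ysqr_neq0 pnatr_eq0 -lt0n (leq_trans _ N_ge3).
exact: pb_le6 (powboundedD W_ge2 (powboundedD W_ge2
  (powboundedM (powboundedM Nkappa_pb (F1 _)) inv_ytau_pb)
  (powboundedM (powboundedM (powboundedM (powboundedM Nkappa_pb kappa_pb) (F1 _)) (F1 _))
    half_pb))
  (powboundedM (powboundedM Nkappa_pb (F2 _ _)) half_pb)) isT.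
Qed.

Lemma coef_model_bounds :
  model_bounds N (W ^+ 6) (ytau p) (hessx f (lsubmx p) (ytau p))
    (rho_xx f p) (nu_xy f p) (nu_yx f p) (lam_yy f p) (mu_yy f p).
Proof.
split; [| exact: bound_rho_xx | exact: bound_nu_xy | exact: bound_nu_yx
       | exact: bound_lam_yy | exact: bound_mu_yy].
by move=> i j; rewrite mxE; exact: pb_le6 (F2 (Some i) (Some j)) isT.
Qed.

End CoefficientBounds.

Lemma bounded_partials_le2 (R : realType) (n : nat) (f : 'rV[R]_n -> R -> R) (tau1 tau2 B : R) :
  bounded_partials f tau1 tau2 -> exists2 W : R, B <= W &
    forall (d e : option 'I_n) (x : 'rV[R]_n) (t : R), tau1 <= t <= tau2 ->
      `|iter_partial f [:: d] x t| <= W /\ `|iter_partial f [:: d; e] x t| <= W.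
Proof.
move=> f_bounded; have [Cf Cf_bound] := choice f_bounded.
pose S := \sum_(de : option 'I_n * option 'I_n) (`|Cf [:: de.1]| + `|Cf [:: de.1; de.2]|).
exists (Num.max B S) => [|d e x t t_in]; first by rewrite le_max lexx.
have le_S : `|Cf [:: d]| + `|Cf [:: d; e]| <= S.
  rewrite /S (bigD1 (d, e)) //= lerDl.
  by apply: sumr_ge0 => de _; rewrite addr_ge0.
have S_le : S <= Num.max B S by rewrite le_max lexx orbT.
have := Cf_bound [:: d] x t t_in; have := Cf_bound [:: d; e] x t t_in.
have := ler_norm (Cf [:: d]); have := ler_norm (Cf [:: d; e]).
have := normr_ge0 (Cf [:: d]); have := normr_ge0 (Cf [:: d; e]).
by move=> *; split; lra.
Qed.

Theorem lemma3p2 (R : realType) (n : nat) (f : 'rV[R]_n -> R -> R) (tau1 tau2 : R) :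
  (1 <= n)%N -> 0 < tau1 -> tau1 < tau2 ->
  smooth_pos f -> heat_sol f -> bounded_partials f tau1 tau2 ->
  exists C : R, 0 < C /\
    forall (N : nat), (3 <= N)%N -> forall p : 'rV[R]_(n + N),
      let x := lsubmx p in
      let tau := enorm (rsubmx p) ^+ 2 / (2 * N%:R) in
      tau1 <= tau <= tau2 ->
      (exists Q1 Q2 : 'M[R]_(n + N),
          offdiag_supp Q1 /\ diag_supp Q2 /\
          (forall i j, `|Q1 i j| <= C /\ `|Q2 i j| <= C) /\
          hess (@bsq R n N f) p =
            (2 * bsq f p / N%:R) *:
              (block_mx (hessx f x tau) 0 0 ((2 * tau)^-1)%:M
               + (Num.sqrt N%:R)^-1 *: Q1 + (N%:R)^-1 *: Q2))
      /\
      (exists E : R, `|E| <= C / N%:R /\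
          hs2 (Bmat f p) =
            4 * bsq f p ^+ 2 / N%:R ^+ 2 *
              (hs2 (hessx f x tau - ((2 * tau)^-1)%:M) + E)).
Proof.
move=> n_ge1 tau1_gt0 tau12 f_smooth _ f_bounded.
have [W W_ge f_le] := bounded_partials_le2 (n%:R + 2 + tau1^-1) f_bounded.
have tau1_inv_gt0 : 0 < tau1^-1 by rewrite invr_gt0.
have n_ge0 := ler0n R n.
have [W_ge0 W_ge2 nW tau1W] : [/\ 0 <= W, 2 <= W, n%:R + 2 <= W & tau1^-1 <= W].
  by split; lra.
have [C C_gt0 model_est] := hess_model_estimates n tau2 tau1_gt0 (exprn_ge0 6 W_ge0).
exists C; split => // N N_ge3 p /=.
rewrite enorm_rsubmx_sqr -/(ytau p) => tau_in; have [tau1_le _] := andP tau_in.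
have N_gt0 : (0 < N)%N by apply: leq_trans N_ge3.
have ysqr_gt0 : 0 < ysqr p.
  by move: (lt_le_trans tau1_gt0 tau1_le); rewrite /ytau pmulr_lgt0 // invr_gt0 mulr_gt0 ?ltr0n.
have ysqrE : \sum_a ycoord a p ^+ 2 = 2 * N%:R * ytau p.
  by rewrite /ytau mulrC divfK // mulf_neq0 // pnatr_eq0 -lt0n.
have bounds := coef_model_bounds N_ge3 n_ge1 W_ge2 nW tau1_gt0 tau1_le tau1W
  (fun d e => f_le d e _ _ tau_in).
have [[Q1 [Q2 [offQ1 diagQ2 bQ eqM]]] hs_dev] :=
  model_est _ _ _ _ _ _ _ _ _ N_ge3 tau_in ysqrE bounds.
rewrite /Bmat (bsq_closedE f N_ge3) (hess_bsq_closed f_smooth N_gt0 ysqr_gt0).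
split; first by exists Q1, Q2; rewrite eqM.
eexists; split; first exact: hs_dev.
rewrite traceless_scale hs2E mxsqnormZ -hs2E addrCA subrr addr0.
by congr (_ * _); field; rewrite pnatr_eq0 -lt0n.
Qed.
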